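(* Let $d\geq 3$ and let $A\in\mathrm{Sym}^d(\mathbb{R}^n)$ be an orthogonal tensor. Then $n=1$ or $n=2$. Moreover, for $n=2$ the orthogonal tensors in $\mathrm{Sym}^d(\mathbb{R}^2)$ are exactly the tensors $(\rho,\dots,\rho)\cdot A_0$ with $\rho\in O(2)$, where $A_0$ is the symmetric tensor with entries \[ (A_0)_{i_1\dots i_d}=\begin{cases}(-1)^k & \text{if }\#\{j: i_j=2\}=2k,\\ 0&\text{otherwise.}\end{cases} \] Equivalently, these are the tensors associated with the forms $\rho^*\mathrm{Ch}_{d,2}$, $\rho\in O(2)$.
   Context: Orthogonal tensors: \begin{itemize} \item For a tensor $A\in\otimes_{j=1}^d\mathbb{R}^n$ and $u\in\mathbb{R}^n$, the contraction $A\times_j u$ is the order-$(d-1)$ tensor $\big(\sum_{i_j}a_{i_1\dots i_j\dots i_d}u_{i_j}\big)$. \item An $n\times n$ matrix ($d=2$) is orthogonal in the usual sense. \item For $d\geq 3$, an $n^d$-tensor $A$ is orthogonal if $A\times_j u$ is orthogonal for every $j=1,\dots,d$ and every unit vector $u\in\mathbb{R}^n$. \end{itemize} The group $O(n)\times\cdots\times O(n)$ acts by \[ \big((\rho^{(1)},\dots,\rho^{(d)})\cdot A\big)_{i_1\dots i_d}=\sum_{j_1,\dots,j_d}\rho^{(1)}_{i_1j_1}\cdots\rho^{(d)}_{i_dj_d}a_{j_1\dots j_d}. \] The binary Chebyshev form is $\mathrm{Ch}_{d,2}(x_1,x_2)=\sum_{k=0}^{\lfloor d/2\rfloor}\binom{d}{2k}(-1)^kx_1^{d-2k}x_2^{2k}$.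 For a form $p$ and $\rho\in O(2)$, $(\rho^*p)(x)=p(\rho^{-1}x)$. The symmetric tensor $A$ associated with a form $p$ satisfies $p(x)=\langle A,x\otimes\cdots\otimes x\rangle_F$. *)

From HB Require Import structures.
From mathcomp Require Import all_boot all_order all_algebra all_fingroup.
Set Implicit Arguments. Unset Strict Implicit. Unset Printing Implicit Defensive.
Import Order.TTheory GRing.Theory Num.Theory.
Local Open Scope ring_scope.

Definition midx (n d : nat) := {ffun 'I_d -> 'I_n}.

Definition tensor (R : Type) (n d : nat) := midx n d -> R.

Definition ins_idx (n d : nat) (j : 'I_d.+1) (i : 'I_n) (t : midx n d) : midx n d.+1 :=
  [ffun k : 'I_d.+1 => if unlift j k is Some k' then t k' else i].

Definition contract (R : nzRingType) (n d : nat) (j : 'I_d.+1) (u : 'I_n -> R)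
  (A : tensor R n d.+1) : tensor R n d :=
  fun t => \sum_(i < n) A (ins_idx j i t) * u i.

Definition unit_vec (R : nzRingType) (n : nat) (u : 'I_n -> R) : Prop :=
  \sum_(i < n) u i ^+ 2 = 1.

Definition idx2 (n : nat) (i j : 'I_n) : midx n 2 :=
  [ffun k : 'I_2 => if val k == 0%N then i else j].

Definition mat_of (R : nzRingType) (n : nat) (A : tensor R n 2) : 'M[R]_n :=
  \matrix_(i, j) A (idx2 i j).

Definition orthogonal_mx (R : nzRingType) (n : nat) (M : 'M[R]_n) : Prop :=
  M *m M^T = 1%:M.

(* Orthogonal tensors: for d = 2 orthogonal matrices; for d >= 3 every
   contraction with a unit vector along every slot is orthogonal.
   (Orders 0 and 1 are not covered by the definition; set to False.) *)
Fixpoint orthogonal_tensor_aux (R : nzRingType) (n d : nat) : tensor R n d.+2 -> Prop :=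
  match d return tensor R n d.+2 -> Prop with
  | 0 => fun A => orthogonal_mx (mat_of A)
  | d'.+1 => fun A => forall (j : 'I_d'.+3) (u : 'I_n -> R),
               unit_vec u -> orthogonal_tensor_aux (contract j u A)
  end.

Definition orthogonal_tensor (R : nzRingType) (n d : nat) : tensor R n d -> Prop :=
  match d return tensor R n d -> Prop with
  | 0 | 1 => fun _ => False
  | d'.+2 => @orthogonal_tensor_aux R n d'
  end.

Definition symmetric_tensor (R : Type) (n d : nat) (A : tensor R n d) : Prop :=
  forall (s : {perm 'I_d}) (t : midx n d), A [ffun k => t (s k)] = A t.

Definition act_diag (R : nzRingType) (n d : nat) (rho : 'M[R]_n) (A : tensor R n d)
  : tensor R n d :=
  fun i => \sum_(j : midx n d) (\prod_(k < d) rho (i k) (j k)) * A j.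

(* A_0 in Sym^d(R^2): entry (-1)^k if the number of slots equal to the
   second basis index is 2k, and 0 otherwise.  ('I_2 index 1 = paper's 2.) *)
Definition A0 (R : nzRingType) (d : nat) : tensor R 2 d :=
  fun i => let c := #|[set k | val (i k) == 1%N]| in
           if odd c then 0 else (-1) ^+ (c./2).

(* Contracting the first slot of a symmetric orthogonal
   tensor with a basis vector gives a symmetric orthogonal tensor of order d - 1, so
   both statements are proved by induction on d from the case of order 3.

   Order 3.  The slices S_i = (a_irc)_{r,c} are symmetric orthogonal matrices, and
   contracting with the unit vector (3 e_i + 4 e_j)/5 gives S_i S_j^T + S_j S_i^T = 0
   for i <> j.  Hence the diagonal vectors v_i = (a_iik)_k satisfy v_i = -v_j for
   i <> j; three distinct indices would force v_0 = -v_0 = 0, contradicting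
   |v_0| = 1.  So n <= 2.

   Dimension 2.  An entry of a symmetric tensor on R^2 only depends on the weight of
   its multi-index (the number of slots equal to the second basis vector).  Over a
   real closed field R we use the complex numbers R[i]: the tensors chebT d w with
   entries Re (w i^weight), |w| = 1, are symmetric and orthogonal (contracting with u
   multiplies w by u_1 + i u_2), and they are exactly the O(2)-orbit of
   A_0 = chebT d 1 (a rotation by z gives w = z^d, a reflection w = conj(z)^d).
   Conversely a symmetric orthogonal tensor is some chebT d w: at order 3 by the
   slice relations, and in general because its two slices are chebT d w0 and
   chebT d w1, with w1 = i w0 by symmetry. *)

From HB Require Import structures.
From mathcomp Require Import all_boot all_order all_algebra all_fingroup.
From mathcomp Require Import complex ring lra.
Import Order.TTheory GRing.Theory Num.Theory.
Local Open Scope ring_scope.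
Local Open Scope complex_scope.
Local Notation Re := complex.Re.
Local Notation Im := complex.Im.
Set Implicit Arguments. Unset Strict Implicit. Unset Printing Implicit Defensive.

Definition weight (d : nat) (t : midx 2 d) : nat := #|[set k | val (t k) == 1%N]|.

Lemma weight_count d (t : midx 2 d) :
  weight t = count (fun k => val (t k) == 1%N) (enum 'I_d).
Proof.
rewrite /weight cardsE cardE /enum_mem size_filter count_filter.
by apply: eq_count => k; rewrite /= andbT.
Qed.

Lemma weight_sum d (t : midx 2 d) : weight t = (\sum_k (val (t k) == 1%N))%N.
Proof. by rewrite /weight -sum1dep_card big_mkcond. Qed.

Lemma weight_le d (t : midx 2 d) : (weight t <= d)%N.
Proof. by rewrite /weight -[X in (_ <= X)%N]card_ord max_card. Qed.

Lemma weight_ins d (j : 'I_d.+1) (i : 'I_2) (t : midx 2 d) :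
  weight (ins_idx j i t) = ((val i == 1%N) + weight t)%N.
Proof.
rewrite !weight_sum (bigD1_ord j) //= /ins_idx ffunE unlift_none; congr (_ + _)%N.
by apply: eq_bigr => k _; rewrite ffunE liftK.
Qed.

Lemma weight_idx2 (r c : 'I_2) : weight (idx2 r c) = ((val r == 1%N) + (val c == 1%N))%N.
Proof. by rewrite weight_sum !big_ord_recr big_ord0 /= /idx2 !ffunE. Qed.

Lemma weight_perm d (t : midx 2 d) (s : {perm 'I_d}) : weight [ffun k => t (s k)] = weight t.
Proof.
rewrite !weight_sum [RHS](reindex_inj (@perm_inj _ s)) /=.
by apply: eq_bigr => k _; rewrite ffunE.
Qed.

Lemma count_mem_weight d (t : midx 2 d) (x : 'I_2) :
  count_mem x [seq t k | k <- enum 'I_d] = if val x == 1%N then weight t else (d - weight t)%N.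
Proof.
rewrite count_map weight_count; case: x => [[|[|//]] hx] /=.
  have e := count_predC (fun k => val (t k) == 1%N) (enum 'I_d).
  rewrite -cardT card_ord in e; rewrite -[X in (X - _)%N]e addKn.
  by apply: eq_count => k /=; case: (t k) => [[|[|]]].
by apply: eq_count => k /=; case: (t k) => [[|[|]]].
Qed.

Lemma weight_zero d : weight ([ffun=> ord0] : midx 2 d) = 0%N.
Proof. by rewrite weight_sum big1 // => k _; rewrite ffunE. Qed.

Lemma sum_I2 (V : nmodType) (F : 'I_2 -> V) : \sum_i F i = F ord0 + F ord_max.
Proof. by rewrite big_ord_recl big_ord1; congr (_ + F _); apply: val_inj. Qed.

Lemma I2_ind (P : 'I_2 -> Prop) : P ord0 -> P ord_max -> forall m, P m.
Proof.
move=> P0 P1 [[|[|//]] lt_m2].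
  by rewrite (_ : Ordinal lt_m2 = ord0) //; apply: val_inj.
by rewrite (_ : Ordinal lt_m2 = ord_max) //; apply: val_inj.
Qed.

Lemma weight_perm_exists d (t t' : midx 2 d) : weight t = weight t' ->
  exists s : {perm 'I_d}, forall k, t k = t' (s k).
Proof.
move=> eq_w.
have : perm_eq [seq t k | k <- enum 'I_d] [tuple t' k | k < d].
  rewrite /= -val_ord_tuple.
  by apply/allP => x _ /=; rewrite !count_mem_weight eq_w.
case/tuple_permP => s ts; exists s => k.
have := congr1 (nth (t k) ^~ k) ts.
by rewrite (nth_map k) ?size_enum_ord // nth_ord_enum -tnth_nth !tnth_mktuple.
Qed.

Lemma symmetric_weight (R : Type) d (A : tensor R 2 d) (t t' : midx 2 d) :
  symmetric_tensor A -> weight t = weight t' -> A t = A t'.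
Proof.
move=> symA /weight_perm_exists [s ts].
rewrite -(symA s t'); congr A; apply/ffunP => k; by rewrite ffunE ts.
Qed.

Section Contractions.
Variable R : comNzRingType.

Definition basis n (i : 'I_n) : 'I_n -> R := fun k => (k == i)%:R.

Lemma unit_basis n (i : 'I_n) : unit_vec (basis i).
Proof.
rewrite /unit_vec (bigD1 i) //= /basis eqxx expr1n big1 ?addr0 // => k /negbTE ->.
by rewrite expr0n.
Qed.

Lemma contract_lin n d (j : 'I_d.+1) (a b : R) (f g : 'I_n -> R) (A : tensor R n d.+1) t :
  contract j (fun k => a * f k + b * g k) A t = a * contract j f A t + b * contract j g A t.
Proof.
rewrite /contract !mulr_sumr -big_split /=; apply: eq_bigr => k _.
by rewrite mulrDr !mulrA ![_ * a]mulrC ![_ * b]mulrC.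
Qed.

Lemma contract_basis n d (j : 'I_d.+1) (i : 'I_n) (A : tensor R n d.+1) t :
  contract j (basis i) A t = A (ins_idx j i t).
Proof.
rewrite /contract (bigD1 i) //= /basis eqxx mulr1 big1 ?addr0 // => k /negbTE ->.
by rewrite mulr0.
Qed.

Lemma unit_comb n (a b : R) (i j : 'I_n) : i != j -> a ^+ 2 + b ^+ 2 = 1 ->
  unit_vec (fun k => a * basis i k + b * basis j k).
Proof.
move=> neq_ij ab1; rewrite /unit_vec (bigD1 i) //= (bigD1 j) 1?eq_sym //= big1.
  by rewrite /basis !eqxx (negbTE neq_ij) eq_sym (negbTE neq_ij) /= !mulr1 !mulr0 -ab1; ring.
move=> k /andP [/negbTE nki /negbTE nkj]; rewrite /basis nki nkj.
by rewrite !mulr0 addr0 expr0n.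
Qed.

Lemma orthogonal_rows n (M : 'M[R]_n) :
  orthogonal_mx M -> forall r s, \sum_k M r k * M s k = (r == s)%:R.
Proof.
move=> /matrixP orthM r s; move: (orthM r s); rewrite !mxE => <-.
by apply: eq_bigr => k _; rewrite mxE.
Qed.

End Contractions.

Lemma ins_tail n d (t : midx n d.+1) :
  ins_idx ord0 (t ord0) [ffun k => t (lift ord0 k)] = t.
Proof.
by apply/ffunP => k; rewrite /ins_idx ffunE; case: unliftP => [k'|] ->; rewrite ?ffunE.
Qed.

Lemma ins_idx_perm n d (i : 'I_n) (t : midx n d) (s : {perm 'I_d}) :
  [ffun k => ins_idx ord0 i t (lift_perm ord0 ord0 s k)] = ins_idx ord0 i [ffun k => t (s k)].
Proof.
apply/ffunP => k; rewrite !ffunE; case: (unliftP ord0 k) => [k'|] ->.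
  by rewrite lift_perm_lift /ins_idx !ffunE !liftK.
by rewrite lift_perm_id /ins_idx ?ffunE unlift_none.
Qed.

Lemma symmetric_contract (R : nzRingType) n d (u : 'I_n -> R) (A : tensor R n d.+1) :
  symmetric_tensor A -> symmetric_tensor (contract ord0 u A).
Proof. by move=> symA s t; apply: eq_bigr => i _; rewrite -ins_idx_perm symA. Qed.

Lemma orthogonal_aux_ext (R : nzRingType) n d (A B : tensor R n d.+2) :
  A =1 B -> orthogonal_tensor_aux A -> orthogonal_tensor_aux B.
Proof.
elim: d A B => [|d IHd] A B eqAB /=.
  by have -> : mat_of B = mat_of A by apply/matrixP => i j; rewrite !mxE eqAB.
move=> orthA j u u1; apply: IHd (orthA j u u1) => t.
by apply: eq_bigr => i _; rewrite eqAB.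
Qed.

Definition idx3 n (i r c : 'I_n) : midx n 3 := ins_idx ord0 i (idx2 r c).

Lemma idx3E n (i r c : 'I_n) (k : 'I_3) : idx3 i r c k = nth i [:: i; r; c] k.
Proof.
rewrite /idx3 /ins_idx ffunE; case: unliftP => [k'|] -> //.
by rewrite /idx2 ffunE lift0; case: k' => [[|[|k']] hk'].
Qed.

Local Notation slot n := (@Ordinal 3 n isT).

Lemma idx3_swap12 n (i r c : 'I_n) :
  [ffun k => idx3 i r c (tperm (slot 1) (slot 2) k)] = idx3 i c r.
Proof.
by apply/ffunP => k; rewrite ffunE !idx3E permE; case: k => [[|[|[|k]]] hk].
Qed.

Lemma idx3_swap01 n (i r c : 'I_n) :
  [ffun k => idx3 i r c (tperm (slot 0) (slot 1) k)] = idx3 r i c.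
Proof.
by apply/ffunP => k; rewrite ffunE !idx3E permE; case: k => [[|[|[|k]]] hk].
Qed.

Section OrderThreeSlices.
Variables (R : realFieldType) (n : nat) (A : tensor R n 3).
Hypotheses (symA : symmetric_tensor A) (orthA : @orthogonal_tensor_aux R n 1 A).

Local Notation a i r c := (A (idx3 i r c)).

Lemma slice_sym12 i r c : a i r c = a i c r.
Proof. by rewrite -idx3_swap12 symA. Qed.

Lemma slice_sym01 i r c : a i r c = a r i c.
Proof. by rewrite -idx3_swap01 symA. Qed.

(* Each slice (a_irc)_{r,c} is the contraction with a basis vector: orthogonal. *)
Lemma slice_orth i r s : \sum_k a i r k * a i s k = (r == s)%:R.
Proof.
rewrite -(orthogonal_rows (orthA ord0 (unit_basis R i)) r s).
by apply: eq_bigr => k _; rewrite !mxE !contract_basis.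
Qed.

(* Polarization: contracting with (3 e_i + 4 e_j)/5 shows that the
   symmetrized product of two distinct slices vanishes. *)
Lemma slice_polar i j r s : i != j ->
  \sum_k (a i r k * a j s k + a j r k * a i s k) = 0.
Proof.
move=> neq_ij; have u1 : (3 / 5 : R) ^+ 2 + (4 / 5) ^+ 2 = 1 by field.
have := orthogonal_rows (orthA ord0 (unit_comb neq_ij u1)) r s.
under eq_bigr => k _ do rewrite !mxE !contract_lin !contract_basis.
have expand k : (3 / 5 * a i r k + 4 / 5 * a j r k) * (3 / 5 * a i s k + 4 / 5 * a j s k) =
  9 / 25 * (a i r k * a i s k) + 16 / 25 * (a j r k * a j s k)
  + 12 / 25 * (a i r k * a j s k + a j r k * a i s k) by field.
rewrite (eq_bigr _ (fun k _ => expand k)) big_split big_split /= -!mulr_sumr !slice_orth.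
by move: (\sum_k _) => X; lra.
Qed.

Lemma slice_row i j r : i != j -> \sum_k a j r k * a i i k = - (r == j)%:R.
Proof.
move=> neq_ij; have := slice_polar r i neq_ij; rewrite big_split /=.
under eq_bigr => k _ do rewrite (slice_sym01 j i k).
by rewrite slice_orth; move: (\sum_k _) => X; lra.
Qed.

(* Slices are symmetric orthogonal matrices, hence involutions. *)
Lemma slice_inv j (z : 'I_n -> R) s :
  \sum_r a j s r * (\sum_k a j r k * z k) = z s.
Proof.
under eq_bigr => r _ do rewrite mulr_sumr.
rewrite exchange_big /=.
under eq_bigr => k _ do (under eq_bigr => r _ do rewrite mulrA (slice_sym12 j r k);
                         rewrite -mulr_suml slice_orth).
rewrite (bigD1 s) //= eqxx mul1r big1 ?addr0 // => k neq_ks.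
by rewrite eq_sym (negbTE neq_ks) mul0r.
Qed.

Lemma slice_anti i j k : i != j -> a i i k = - a j j k.
Proof.
move=> neq_ij; rewrite -(slice_inv j (fun k => a i i k) k).
under eq_bigr => r _ do rewrite slice_row //.
rewrite (bigD1 j) //= eqxx big1 ?addr0 => [|r /negbTE ->]; last by rewrite oppr0 mulr0.
by rewrite mulrN1 slice_sym12.
Qed.

(* Three pairwise opposite vectors must vanish, contradicting orthonormality. *)
Lemma slice_dim : (n <= 2)%N.
Proof.
rewrite leqNgt; apply/negP => n_gt2.
pose i0 : 'I_n := Ordinal (leq_trans (isT : (0 < 3)%N) n_gt2).
pose i1 : 'I_n := Ordinal (leq_trans (isT : (1 < 3)%N) n_gt2).
pose i2 : 'I_n := Ordinal n_gt2.
have zero k : a i0 i0 k = 0.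
  have := slice_anti k (isT : i0 != i1); have := slice_anti k (isT : i1 != i2).
  have := slice_anti k (isT : i0 != i2); lra.
have := slice_orth i0 i0 i0; rewrite eqxx big1 => [/eqP|k _]; last by rewrite zero mul0r.
by rewrite eq_sym oner_eq0.
Qed.

End OrderThreeSlices.

(* Contracting with a basis vector lowers the order, so the bound n <= 2
   propagates from order 3 to every order d >= 3. *)
Lemma dim_bound (R : realFieldType) d : forall n (A : tensor R n d.+3), (0 < n)%N ->
  symmetric_tensor A -> @orthogonal_tensor_aux R n d.+1 A -> (n <= 2)%N.
Proof.
elim: d => [|d IHd] n A n_gt0 symA orthA; first exact: slice_dim symA orthA.
have e0 := unit_basis R (Ordinal n_gt0).
exact: IHd n_gt0 (symmetric_contract _ symA) (orthA ord0 _ e0).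
Qed.

Section ChebyshevTensors.
Variable R : rcfType.

Definition sqnorm (z : R[i]) : R := Re z ^+ 2 + Im z ^+ 2.

Definition unimodular (z : R[i]) : Prop := sqnorm z = 1.

Lemma sqnormM (x y : R[i]) : sqnorm (x * y) = sqnorm x * sqnorm y.
Proof. by case: x => a b; case: y => c e; rewrite /sqnorm /=; ring. Qed.

Lemma sqnormX (x : R[i]) m : sqnorm (x ^+ m) = sqnorm x ^+ m.
Proof.
elim: m => [|m IHm]; first by rewrite !expr0 /sqnorm /= expr1n expr0n addr0.
by rewrite !exprS sqnormM IHm.
Qed.

Lemma unimodularM (x y : R[i]) : unimodular x -> unimodular y -> unimodular (x * y).
Proof. by rewrite /unimodular sqnormM => -> ->; rewrite mulr1. Qed.

Lemma unimodularX (x : R[i]) m : unimodular x -> unimodular (x ^+ m).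
Proof. by rewrite /unimodular sqnormX => ->; rewrite expr1n. Qed.

Lemma unimodularJ (x : R[i]) : unimodular x -> unimodular (conjc x).
Proof. by case: x => a b; rewrite /unimodular /sqnorm /= sqrrN. Qed.

Lemma unimodular_root (x : R[i]) d : (0 < d)%N -> unimodular (x ^+ d) -> unimodular x.
Proof.
move=> d_gt0; rewrite /unimodular sqnormX => xd1.
have x_ge0 : 0 <= sqnorm x by rewrite addr_ge0 // sqr_ge0.
by apply/eqP; rewrite -(eqrXn2 d_gt0 x_ge0 ler01) expr1n xd1.
Qed.

Lemma unit_vec2 (u : 'I_2 -> R) : unit_vec u -> unimodular (u ord0 +i* u ord_max).
Proof. by rewrite /unit_vec sum_I2. Qed.

(* The tensor of the binary form x |-> Re (w (x_1 + i x_2)^d): its entry at a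
   multi-index t is Re (w i^(weight t)).  For w = 1 it is A_0 (the Chebyshev form). *)
Definition chebT (d : nat) (w : R[i]) : tensor R 2 d := fun t => Re (w * 'i%C ^+ weight t).
Arguments chebT : clear implicits.

Lemma chebT_sym d (w : R[i]) : symmetric_tensor (chebT d w).
Proof. by move=> s t; rewrite /chebT weight_perm. Qed.

Lemma chebT_contract d (j : 'I_d.+1) (u : 'I_2 -> R) (w : R[i]) t :
  contract j u (chebT d.+1 w) t = chebT d (w * (u ord0 +i* u ord_max)) t.
Proof.
rewrite /contract /chebT sum_I2 !weight_ins /= add0n add1n.
rewrite exprS mulrCA mulrAC; move: (w * _) => x.
by case: x => a b /=; ring.
Qed.

(* Order 2: chebT 2 w is the matrix ((a, -b), (-b, -a)) for w = a + i b. *)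
Lemma chebT_orth2 (w : R[i]) : unimodular w -> orthogonal_mx (mat_of (chebT 2 w)).
Proof.
case: w => a b; rewrite /unimodular /sqnorm /= => w1.
apply/matrixP => r s; rewrite !mxE sum_I2 !mxE /chebT !weight_idx2.
case: r => [[|[|//]] ?]; case: s => [[|[|//]] ?];
  rewrite /= ?expr0 ?expr1 ?expr2 /=; lra.
Qed.

(* chebT d w is orthogonal: all its contractions are again chebT tensors. *)
Lemma chebT_orth d (w : R[i]) : unimodular w -> orthogonal_tensor_aux (chebT d.+2 w).
Proof.
elim: d w => [|d IHd] w w1 /=; first exact: chebT_orth2.
move=> j u u1; apply: orthogonal_aux_ext (fun t => esym (chebT_contract j u w t)) _.
exact/IHd/unimodularM/unit_vec2.
Qed.

Lemma Re_i_pow m : Re ('i%C ^+ m) = if odd m then 0 else (-1) ^+ m./2 :> R.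
Proof.
rewrite -{1}(odd_double_half m) exprD -mul2n exprM sqr_i.
rewrite -[(-1 : R[i])](rmorphN1 (real_complex R)) -rmorphXn.
by case: (odd m); rewrite ?expr1 ?expr0; move: ((-1) ^+ _) => c /=; ring.
Qed.

Lemma A0_chebT d t : @A0 R d t = chebT d 1 t.
Proof. by rewrite /chebT mul1r Re_i_pow. Qed.

Definition row_c (rho : 'M[R]_2) (m : 'I_2) : R[i] := rho m ord0 +i* rho m ord_max.

Lemma row_c_sum (rho : 'M[R]_2) m :
  row_c rho m = \sum_(m' < 2) (rho m m')%:C * 'i%C ^+ (val m' == 1%N).
Proof. by rewrite sum_I2 /row_c /= expr0 expr1; apply/eqP; rewrite eq_complex /=; simpc. Qed.

Lemma Re_scale (c : R) (z : R[i]) : Re (c%:C * z) = c * Re z.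
Proof. by case: z => a b /=; ring. Qed.

Lemma act_A0_rows d (rho : 'M[R]_2) t :
  act_diag rho (@A0 R d) t = Re (\prod_k row_c rho (t k)).
Proof.
under eq_bigr => k _ do rewrite row_c_sum.
rewrite bigA_distr_bigA raddf_sum; apply: eq_bigr => j _ /=.
rewrite big_split /= -rmorph_prod prodrXr -weight_sum Re_scale.
by rewrite A0_chebT /chebT mul1r.
Qed.

Lemma prod_geometric d (f : 'I_2 -> R[i]) (z c : R[i]) (t : midx 2 d) :
  (forall m, f m = z * c ^+ (val m == 1%N)) -> \prod_k f (t k) = z ^+ d * c ^+ weight t.
Proof.
move=> fE; rewrite (eq_bigr _ (fun k _ => fE (t k))) big_split /=.
by rewrite prodr_const card_ord prodrXr -weight_sum.
Qed.

Lemma orth2_rows (rho : 'M[R]_2) : orthogonal_mx rho ->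
  unimodular (row_c rho ord0) /\
  (row_c rho ord_max = 'i%C * row_c rho ord0 \/ row_c rho ord_max = - 'i%C * row_c rho ord0).
Proof.
move=> orth_rho; have rows := orthogonal_rows orth_rho.
move: (rows ord0 ord0) (rows ord_max ord_max) (rows ord0 ord_max).
rewrite !sum_I2 /unimodular /sqnorm /row_c /= mulr1n mulr0n.
move: (rho ord0 ord0) (rho ord0 ord_max) (rho ord_max ord0) (rho ord_max ord_max) => a b c e.
move=> norm0 norm1 orth01; split; first lra.
pose l := a * e - b * c.
have cE : c = - l * b.
  transitivity (c * (a * a + b * b) - a * (a * c + b * e)).
    by rewrite norm0 orth01; ring.
  by rewrite /l; ring.
have eE : e = l * a.
  transitivity (e * (a * a + b * b) - b * (a * c + b * e)).
    by rewrite norm0 orth01; ring.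
  by rewrite /l; ring.
have /eqP : l ^+ 2 = 1.
  transitivity (l ^+ 2 * (a * a + b * b)); first by rewrite norm0 mulr1.
  by rewrite -norm1 cE eE; ring.
rewrite sqrf_eq1 => /orP [] /eqP l_pm1; [left | right];
  by apply/eqP; rewrite eq_complex /= cE eE l_pm1; apply/andP; split; apply/eqP; ring.
Qed.

Lemma Re_conj (z : R[i]) : Re (conjc z) = Re z.
Proof. by case: z. Qed.

Lemma conjc_geometric (x : R[i]) m k :
  conjc (conjc x ^+ m * 'i%C ^+ k) = x ^+ m * (- 'i%C) ^+ k.
Proof.
have conj_i : conjc 'i%C = - 'i%C :> R[i] by apply/eqP; rewrite eq_complex /= oppr0 !eqxx.
by rewrite -[in RHS](conjcK x) -conj_i -!rmorphXn -rmorphM.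
Qed.

Lemma act_orth_chebT d (rho : 'M[R]_2) : orthogonal_mx rho ->
  exists w, unimodular w /\ forall t, act_diag rho (@A0 R d) t = chebT d w t.
Proof.
set z := row_c rho ord0; move=> /orth2_rows [z1 [row1|row1]].
  exists (z ^+ d); split => [|t]; first exact: unimodularX.
  rewrite act_A0_rows (@prod_geometric _ _ z 'i%C) //.
  by apply: I2_ind; rewrite /= ?expr0 ?mulr1 // expr1 row1 mulrC.
exists (conjc z ^+ d); split => [|t]; first exact/unimodularX/unimodularJ.
rewrite act_A0_rows (@prod_geometric _ _ z (- 'i%C)); last first.
  by apply: I2_ind; rewrite /= ?expr0 ?mulr1 // expr1 row1 mulrC.
by rewrite /chebT -[RHS]Re_conj conjc_geometric.
Qed.

Definition rot (z : R[i]) : 'M[R]_2 :=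
  \matrix_(m, k) let x := 'i%C ^+ val m * z in if k == ord0 then Re x else Im x.

Lemma row_c_rot (z : R[i]) m : row_c (rot z) m = z * 'i%C ^+ (val m == 1%N).
Proof. by rewrite /row_c !mxE /= mulrC; case: m => [[|[|//]] ?] /=; case: (z * _). Qed.

Lemma rot_orth (z : R[i]) : unimodular z -> orthogonal_mx (rot z).
Proof.
case: z => a b; rewrite /unimodular /sqnorm /= => z1.
apply/matrixP => r s; rewrite !mxE sum_I2 !mxE.
case: r => [[|[|//]] ?]; case: s => [[|[|//]] ?]; rewrite /= ?expr0 ?expr1 /=; lra.
Qed.

Lemma act_rot d (z : R[i]) t : act_diag (rot z) (@A0 R d) t = chebT d (z ^+ d) t.
Proof. by rewrite act_A0_rows (@prod_geometric _ _ z 'i%C) // => m; rewrite row_c_rot. Qed.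

Lemma chebT_act d (w : R[i]) : (0 < d)%N -> unimodular w ->
  exists rho, orthogonal_mx rho /\ forall t, chebT d w t = act_diag rho (@A0 R d) t.
Proof.
move=> d_gt0 w1; have rootK : (d.-root w) ^+ d = w by rewrite rootCK.
exists (rot (d.-root w)); split => [|t]; last by rewrite act_rot rootK.
by apply/rot_orth/(unimodular_root d_gt0); rewrite rootK.
Qed.

Lemma A0_orbit d (A : tensor R 2 d) : (0 < d)%N ->
  (exists rho, orthogonal_mx rho /\ forall t, A t = act_diag rho (@A0 R d) t) <->
  (exists w, unimodular w /\ forall t, A t = chebT d w t).
Proof.
move=> d_gt0; split => [[rho [orth_rho Arho]] | [w [w1 Aw]]].
  have [w [w1 rhow]] := act_orth_chebT d orth_rho.
  by exists w; split => // t; rewrite Arho rhow.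
have [rho [orth_rho wrho]] := chebT_act d_gt0 w1.
by exists rho; split => // t; rewrite Aw wrho.
Qed.

End ChebyshevTensors.

Arguments chebT {R} d w _.

Section Classification.
Variable R : rcfType.

(* Order 3: the slice relations force the entries p, q, -p, -q of weights
   0, 1, 2, 3 with p^2 + q^2 = 1, i.e. A = chebT 3 (p - i q). *)
Lemma classify_order3 (A : tensor R 2 3) :
  symmetric_tensor A -> @orthogonal_tensor_aux R 2 1 A ->
  exists w, unimodular w /\ forall t, A t = chebT 3 w t.
Proof.
move=> symA orthA; pose b0 : 'I_2 := ord0; pose b1 : 'I_2 := ord_max.
have by_weight t t' : weight t = weight t' -> A t = A t' := symmetric_weight symA.
have weight3 i r c :
    weight (idx3 i r c) = ((val i == 1%N) + ((val r == 1%N) + (val c == 1%N)))%N.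
  by rewrite weight_ins weight_idx2.
pose p := A (idx3 b0 b0 b0); pose q := A (idx3 b0 b0 b1).
have r_eq : A (idx3 b0 b1 b1) = - p.
  rewrite /p (slice_anti symA orthA b0 (isT : b0 != b1)) opprK.
  by apply: by_weight; rewrite !weight3.
have s_eq : A (idx3 b1 b1 b1) = - q.
  by rewrite /q (slice_anti symA orthA b1 (isT : b0 != b1)) opprK.
have pq1 : p ^+ 2 + q ^+ 2 = 1.
  by have := slice_orth orthA b0 b0 b0; rewrite sum_I2 eqxx -!expr2.
exists (p -i* q); split => [|t]; first by rewrite /unimodular /sqnorm /= sqrrN.
have := weight_le t; case wt: (weight t) => [|[|[|[|//]]]] _.
- by rewrite (by_weight t (idx3 b0 b0 b0)) ?weight3 // -/p /chebT wt ?exprS ?expr0 /=; ring.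
- by rewrite (by_weight t (idx3 b0 b0 b1)) ?weight3 // -/q /chebT wt ?exprS ?expr0 /=; ring.
- by rewrite (by_weight t (idx3 b0 b1 b1)) ?weight3 // r_eq /chebT wt ?exprS ?expr0 /=; ring.
- by rewrite (by_weight t (idx3 b1 b1 b1)) ?weight3 // s_eq /chebT wt ?exprS ?expr0 /=; ring.
Qed.

Lemma chebT_shift (w0 w1 : R[i]) :
  Re (w0 * 'i%C ^+ 1) = Re (w1 * 'i%C ^+ 0) ->
  Re (w0 * 'i%C ^+ 2) = Re (w1 * 'i%C ^+ 1) -> w1 = 'i%C * w0.
Proof.
case: w0 => a b; case: w1 => x y; rewrite expr2 expr1 expr0 mulr1 /= => eq0 eq1.
by apply/eqP; rewrite eq_complex /=; apply/andP; split; apply/eqP; lra.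
Qed.

(* Every symmetric orthogonal tensor on R^2 of order d >= 3 is some chebT d w:
   its two slices are of this form by induction, and symmetry ties them. *)
Lemma classify_sym_orth d : forall A : tensor R 2 d.+3,
  symmetric_tensor A -> @orthogonal_tensor_aux R 2 d.+1 A ->
  exists w, unimodular w /\ forall t, A t = chebT d.+3 w t.
Proof.
elim: d => [|d IHd] A symA orthA; first exact: classify_order3.
have [w0 [w0_1 slice0]] :=
  IHd _ (symmetric_contract _ symA) (orthA ord0 _ (unit_basis R ord0)).
have [w1 [_ slice1]] :=
  IHd _ (symmetric_contract _ symA) (orthA ord0 _ (unit_basis R ord_max)).
have A0t t : A (ins_idx ord0 ord0 t) = chebT _ w0 t by rewrite -slice0 contract_basis.
have A1t t : A (ins_idx ord0 ord_max t) = chebT _ w1 t by rewrite -slice1 contract_basis.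
have swap (t : midx 2 d.+2) :
    chebT _ w0 (ins_idx ord0 ord_max t) = chebT _ w1 (ins_idx ord0 ord0 t).
  by rewrite -A0t -A1t; apply: symmetric_weight symA _; rewrite !weight_ins.
have w1E : w1 = 'i%C * w0.
  have := swap [ffun=> ord0]; have := swap (ins_idx ord0 ord_max [ffun=> ord0]).
  rewrite /chebT !weight_ins !weight_zero => eq1 eq0.
  exact: chebT_shift.
exists w0; split => // t.
suff key m t' : A (ins_idx ord0 m t') = chebT _ w0 (ins_idx ord0 m t').
  by rewrite -(ins_tail t) key.
elim/I2_ind: m; first by rewrite A0t /chebT weight_ins.
by rewrite A1t w1E /chebT weight_ins /= add1n exprS -mulrA mulrCA.
Qed.

End Classification.

Theorem proposition1p6 (R : rcfType) (d : nat) (hd : (3 <= d)%N) :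
  (forall (n : nat) (A : tensor R n d), (0 < n)%N ->
     symmetric_tensor A -> orthogonal_tensor A -> n = 1%N \/ n = 2%N) /\
  (forall A : tensor R 2 d,
     (symmetric_tensor A /\ orthogonal_tensor A) <->
     exists rho : 'M[R]_2, orthogonal_mx rho /\ (forall t, A t = act_diag rho (@A0 R d) t)).
Proof.
case: d hd => [|[|[|d]]] // _; split.
  move=> n A n_gt0 symA orthA; have := dim_bound n_gt0 symA orthA.
  by case: n {A symA orthA} n_gt0 => [|[|[|n]]] //; auto.
move=> A; rewrite A0_orbit //; split => [[symA orthA] | [w [w1 Aw]]].
  exact: classify_sym_orth.
split; first by move=> s t; rewrite !Aw chebT_sym.
by apply: orthogonal_aux_ext (chebT_orth _ w1) => t; rewrite Aw.
Qed.
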